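(* Let $(\mu^{(n)})$ be an almost-Berger sequence. Then $\sec(\mu^{(n)})(e_0\wedge e_1)\to0$, $\sec(\mu^{(n)})(e_1\wedge e_2)\to4$ and $\sec(\mu^{(n)})(e_0\wedge e_2)\to0$ as $n\to+\infty$ if and only if $\mathrm{reg}(\mu^{(n)})\ge2$.
   Context: Let $X_0=\begin{pmatrix}i&0\\0&-i\end{pmatrix}$, $X_1=\begin{pmatrix}0&-1\\1&0\end{pmatrix}$, $X_2=\begin{pmatrix}0&i\\i&0\end{pmatrix}$, a basis of $\mathfrak{su}(2)$ with $[X_0,X_1]=-2X_2$, $[X_0,X_2]=2X_1$, $[X_1,X_2]=-2X_0$. For $\varepsilon,\lambda_1,\lambda_2>0$ let $g$ be the left-invariant metric on $\mathsf{SU}(2)$ with $X_0,X_1,X_2$ pairwise orthogonal and $g(X_0,X_0)=\varepsilon$, $g(X_1,X_1)=\lambda_1$, $g(X_2,X_2)=\lambda_2$; identify the orthonormal basis $X_0/\sqrt\varepsilon,X_1/\sqrt{\lambda_1},X_2/\sqrt{\lambda_2}$ with the standard basis $(e_0,e_1,e_2)$ of $\mathbb R^3$, and let $\mu$ be the corresponding bracket on $\mathbb R^3$; $\sec(\mu)(e_i\wedge e_j)$ denotes the sectional curvature of $g$ on the plane spanned by $e_i,e_j$. An almost-Berger sequence is a sequence $(\mu^{(n)})$ of such brackets, with parameters $(\varepsilon^{(n)},\lambda_1^{(n)},\lambda_2^{(n)})$, such that $\varepsilon^{(n)}\to0$, $\lambda_i^{(n)}\to1$ ($i=1,2$), and there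 is $C>0$ with $|\lambda_1^{(n)}-\lambda_2^{(n)}|\le C\varepsilon^{(n)}$ for all $n$ (equivalently, the sectional curvatures are uniformly bounded). Its regularity index is $\mathrm{reg}(\mu^{(n)})=\sup\{k\in\mathbb Z:(\varepsilon^{(n)})^{-k/2}|\lambda_1^{(n)}-\lambda_2^{(n)}|\to0\text{ as }n\to\infty\}\in\{1,2,\dots\}\cup\{+\infty\}$. *)

From Stdlib Require Import Reals Lra ZArith.
Open Scope R_scope.

(* Structure constants of su(2) in the basis X0, X1, X2:
   [X_i, X_j] = sum_k su2_a i j k * X_k, with
   [X0,X1] = -2 X2, [X0,X2] = 2 X1, [X1,X2] = -2 X0 (and antisymmetry). *)
Definition su2_a (i j k : nat) : R :=
  match i, j, k with
  | 0, 1, 2 => -2 | 1, 0, 2 => 2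
  | 0, 2, 1 => 2  | 2, 0, 1 => -2
  | 1, 2, 0 => -2 | 2, 1, 0 => 2
  | _, _, _ => 0
  end.

Definition gdiag (eps l1 l2 : R) (i : nat) : R :=
  match i with 0 => eps | 1 => l1 | _ => l2 end.

(* The bracket mu on R^3 obtained by identifying the g-orthonormal basis
   e_i = X_i / sqrt(g(X_i,X_i)) with the standard basis:
   mu(e_i, e_j) = sum_k mu_c i j k e_k, where
   mu_c i j k = su2_a i j k * sqrt(g_k) / (sqrt(g_i) sqrt(g_j)). *)
Definition mu_c (eps l1 l2 : R) (i j k : nat) : R :=
  su2_a i j k * sqrt (gdiag eps l1 l2 k)
  / (sqrt (gdiag eps l1 l2 i) * sqrt (gdiag eps l1 l2 j)).

Definition sum3 (f : nat -> R) : R := sum_f_R0 f 2.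

(* Levi-Civita connection of the left-invariant metric for which the e_i
   are orthonormal, from the Koszul formula:
   <nabla_{e_i} e_j, e_k> = 1/2 (c_ijk - c_jki + c_kij),
   with c_ijk = <mu(e_i,e_j), e_k>. *)
Definition Gamma (c : nat -> nat -> nat -> R) (i j k : nat) : R :=
  / 2 * (c i j k - c j k i + c k i j).

(* <R(e_i,e_j) e_l, e_p> with R(X,Y) = nabla_X nabla_Y - nabla_Y nabla_X - nabla_[X,Y]
   (all fields left-invariant, so coefficients are constant). *)
Definition Rm (c : nat -> nat -> nat -> R) (i j l p : nat) : R :=
  sum3 (fun m => Gamma c j l m * Gamma c i m p
                 - Gamma c i l m * Gamma c j m p
                 - c i j m * Gamma c m l p).

Definition sec (c : nat -> nat -> nat -> R) (i j : nat) : R := Rm c i j j i.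

Definition sec_seq (eps l1 l2 : nat -> R) (i j : nat) : nat -> R :=
  fun n => sec (mu_c (eps n) (l1 n) (l2 n)) i j.

Definition almost_Berger (eps l1 l2 : nat -> R) : Prop :=
  (forall n, 0 < eps n) /\ (forall n, 0 < l1 n) /\ (forall n, 0 < l2 n) /\
  Un_cv eps 0 /\ Un_cv l1 1 /\ Un_cv l2 1 /\
  exists C, 0 < C /\ forall n, Rabs (l1 n - l2 n) <= C * eps n.

(* k is in the set whose supremum is the regularity index:
   eps^(-k/2) |l1 - l2| -> 0. *)
Definition reg_set (eps l1 l2 : nat -> R) (k : Z) : Prop :=
  Un_cv (fun n => Rpower (eps n) (- IZR k / 2) * Rabs (l1 n - l2 n)) 0.

(* reg(mu^(n)) >= k, i.e. sup { k' in Z | reg_set k' } >= k; for a set of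
   integers this is literally: some element k' >= k. *)
Definition reg_ge (eps l1 l2 : nat -> R) (k : Z) : Prop :=
  exists k' : Z, (k <= k')%Z /\ reg_set eps l1 l2 k'.

From Stdlib Require Import Reals Lra Lia ZArith.
Open Scope R_scope.

(* With d = (l1 - l2) / eps, the three sectional curvatures are explicit
   rational functions of eps, l1, l2 and d, for instance
   sec(e0 /\ e1) = (d (l1 + 3 l2 - 2 eps) + eps) / (l1 l2).  As eps -> 0 and
   l1, l2 -> 1, all three limits hold as soon as d -> 0, and conversely
   sec(e0 /\ e1) -> 0 alone forces d -> 0.  On the other side
   eps^(-1) |l1 - l2| = |d|, and since eps^(-k/2) increases with k once
   eps <= 1, reg >= 2 also amounts to d -> 0. *)

Lemma Un_cv_const (c : R) : Un_cv (fun _ => c) c.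
Proof.
  intros r hr; exists 0%nat; intros n _.
  unfold R_dist; rewrite Rminus_diag, Rabs_R0; exact hr.
Qed.

Lemma Un_cv_Rinv (u : nat -> R) (l : R) :
  l <> 0 -> Un_cv u l -> Un_cv (fun n => / u n) (/ l).
Proof.
  intros hl hu; apply (continuity_seq Rinv); auto.
  apply (continuity_pt_inv id); auto.
  apply derivable_continuous_pt, derivable_pt_id.
Qed.

Lemma Un_cv_Rabs_0 (u : nat -> R) :
  Un_cv (fun n => Rabs (u n)) 0 <-> Un_cv u 0.
Proof.
  unfold Un_cv, R_dist.
  split; intros hu r hr; destruct (hu r hr) as [N hN]; exists N; intros n hn;
    specialize (hN n hn); rewrite Rminus_0_r in *; rewrite ?Rabs_Rabsolu in *;
    exact hN.
Qed.

Lemma Un_cv_0_le (u w : nat -> R) (N : nat) :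
  (forall n, (n >= N)%nat -> Rabs (w n) <= Rabs (u n)) ->
  Un_cv u 0 -> Un_cv w 0.
Proof.
  unfold Un_cv, R_dist; intros hle hu r hr.
  destruct (hu r hr) as [M hM]; exists (Nat.max M N); intros n hn.
  specialize (hM n ltac:(lia)); specialize (hle n ltac:(lia)).
  rewrite Rminus_0_r in *; lra.
Qed.

Lemma Un_cv_mult_0_l (u v : nat -> R) (l : R) :
  l <> 0 -> Un_cv v l -> Un_cv (fun n => u n * v n) 0 -> Un_cv u 0.
Proof.
  intros hl hv huv.
  assert (hl2 : 0 < Rabs l / 2) by (pose proof (Rabs_pos_lt l hl); lra).
  destruct (hv _ hl2) as [N hN].
  (* Eventually |v n| >= |l|/2, so |u n| <= 2 |u n v n| / |l|. *)
  apply (Un_cv_0_le (fun n => 2 / Rabs l * (u n * v n)) u N).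
  - intros n hn; specialize (hN n hn); unfold R_dist in hN.
    pose proof (Rabs_triang_inv l (v n)); rewrite Rabs_minus_sym in hN.
    rewrite !Rabs_mult, (Rabs_right (2 / Rabs l)) by
      (left; apply Rdiv_lt_0_compat; lra).
    pose proof (Rabs_pos (u n)).
    apply (Rmult_le_reg_l (Rabs l / 2)); [lra|].
    field_simplify; [nra | lra].
  - rewrite <- (Rmult_0_r (2 / Rabs l)).
    apply (CV_mult (fun _ => 2 / Rabs l)); [apply Un_cv_const | exact huv].
Qed.

Lemma Rpower_le_exponent (x m n : R) :
  0 < x <= 1 -> m <= n -> Rpower x n <= Rpower x m.
Proof.
  intros [hx hx1] hmn; unfold Rpower.
  assert (hln : ln x <= 0).
  { destruct (Rle_lt_or_eq_dec _ _ hx1) as [h | ->]; [| rewrite ln_1; lra].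
    rewrite <- ln_1; left; apply ln_increasing; lra. }
  destruct (Req_dec (n * ln x) (m * ln x)) as [-> | hne]; [lra|].
  left; apply exp_increasing; nra.
Qed.

Ltac Un_cv_arith :=
  unfold Rdiv;
  repeat first [ apply CV_minus | apply CV_plus | apply CV_mult
               | apply Un_cv_Rinv; [lra |] | apply Un_cv_const | assumption ].

Lemma sec_mu_c (e a b : R) : 0 < e -> 0 < a -> 0 < b ->
  let d := (a - b) / e in
  sec (mu_c e a b) 0 1 = (d * (a + 3 * b - 2 * e) + e) / (a * b) /\
  sec (mu_c e a b) 0 2 = (d * (2 * e - b - 3 * a) + e) / (a * b) /\
  sec (mu_c e a b) 1 2 = (d * d * e - 3 * e + 2 * (a + b)) / (a * b).
Proof.
  intros he ha hb d; subst d.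
  (* Once e, a, b are squares, sqrt_square removes every root and the
     formulas become a field identity. *)
  rewrite <- (sqrt_sqrt e), <- (sqrt_sqrt a), <- (sqrt_sqrt b) by lra.
  pose proof (sqrt_lt_R0 e he); pose proof (sqrt_lt_R0 a ha);
    pose proof (sqrt_lt_R0 b hb).
  set (x := sqrt e) in *; set (y := sqrt a) in *; set (z := sqrt b) in *.
  clearbody x y z.
  unfold sec, Rm, sum3, Gamma, mu_c, gdiag, su2_a; simpl.
  rewrite !sqrt_square by lra.
  repeat split; field; lra.
Qed.

Definition berger_defect (eps l1 l2 : nat -> R) (n : nat) : R :=
  (l1 n - l2 n) / eps n.

Section Regularity.

Variables eps l1 l2 : nat -> R.
Hypotheses (eps_pos : forall n, 0 < eps n) (eps_cv0 : Un_cv eps 0).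

Lemma reg_set_antitone (k k' : Z) :
  (k <= k')%Z -> reg_set eps l1 l2 k' -> reg_set eps l1 l2 k.
Proof.
  intros hkk'; destruct (eps_cv0 1 Rlt_0_1) as [N hN].
  apply Un_cv_0_le with (N := N); intros n hn.
  specialize (hN n hn); unfold R_dist in hN.
  rewrite Rminus_0_r, Rabs_right in hN by (left; apply eps_pos).
  assert (hpow : Rpower (eps n) (- IZR k / 2) <= Rpower (eps n) (- IZR k' / 2)).
  { apply Rpower_le_exponent; [split; [apply eps_pos | lra] |].
    apply IZR_le in hkk'; lra. }
  rewrite !Rabs_mult, Rabs_Rabsolu,
    (Rabs_right (Rpower _ (- IZR k / 2))), (Rabs_right (Rpower _ (- IZR k' / 2)))
    by (left; apply exp_pos).
  apply Rmult_le_compat_r; [apply Rabs_pos | exact hpow].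
Qed.

Lemma reg_set_2_iff :
  reg_set eps l1 l2 2 <-> Un_cv (berger_defect eps l1 l2) 0.
Proof.
  assert (hext : forall n, Rpower (eps n) (- IZR 2 / 2) * Rabs (l1 n - l2 n)
                           = Rabs (berger_defect eps l1 l2 n)).
  { intro n; replace (- IZR 2 / 2) with (Ropp 1) by lra.
    unfold berger_defect, Rdiv.
    rewrite Rpower_Ropp, Rpower_1, Rabs_mult, Rabs_inv,
      (Rabs_right (eps n)) by (try left; apply eps_pos).
    ring. }
  rewrite <- Un_cv_Rabs_0; unfold reg_set; split; apply Un_cv_ext;
    [exact hext | intro n; symmetry; apply hext].
Qed.

Lemma reg_ge_2_iff :
  reg_ge eps l1 l2 2 <-> Un_cv (berger_defect eps l1 l2) 0.
Proof.
  rewrite <- reg_set_2_iff; split.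
  - intros [k [hk hreg]]; exact (reg_set_antitone 2 k hk hreg).
  - intros hreg; exists 2%Z; split; [lia | exact hreg].
Qed.

End Regularity.

Section Curvature.

Variables eps l1 l2 : nat -> R.
Hypotheses (eps_pos : forall n, 0 < eps n) (l1_pos : forall n, 0 < l1 n)
  (l2_pos : forall n, 0 < l2 n).
Hypotheses (eps_cv0 : Un_cv eps 0) (l1_cv1 : Un_cv l1 1) (l2_cv1 : Un_cv l2 1).

Let d := berger_defect eps l1 l2.

Lemma sec_seq_formula (n : nat) :
  sec_seq eps l1 l2 0 1 n
    = (d n * (l1 n + 3 * l2 n - 2 * eps n) + eps n) / (l1 n * l2 n) /\
  sec_seq eps l1 l2 0 2 n
    = (d n * (2 * eps n - l2 n - 3 * l1 n) + eps n) / (l1 n * l2 n) /\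
  sec_seq eps l1 l2 1 2 n
    = (d n * d n * eps n - 3 * eps n + 2 * (l1 n + l2 n)) / (l1 n * l2 n).
Proof. exact (sec_mu_c _ _ _ (eps_pos n) (l1_pos n) (l2_pos n)). Qed.

Lemma defect_cv0_of_sec01 :
  Un_cv (sec_seq eps l1 l2 0 1) 0 -> Un_cv d 0.
Proof.
  intros hsec.
  apply (Un_cv_mult_0_l d (fun n => l1 n + 3 * l2 n - 2 * eps n) 4);
    [lra | replace 4 with (1 + 3 * 1 - 2 * 0) by ring; Un_cv_arith |].
  apply Un_cv_ext
    with (fun n => sec_seq eps l1 l2 0 1 n * (l1 n * l2 n) - eps n).
  { intro n; destruct (sec_seq_formula n) as [-> _].
    field; pose proof (l1_pos n); pose proof (l2_pos n); lra. }
  replace 0 with (0 * (1 * 1) - 0) by ring; Un_cv_arith.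
Qed.

Lemma sec_limits_of_defect_cv0 : Un_cv d 0 ->
  Un_cv (sec_seq eps l1 l2 0 1) 0 /\ Un_cv (sec_seq eps l1 l2 1 2) 4 /\
  Un_cv (sec_seq eps l1 l2 0 2) 0.
Proof.
  intros hd; split; [| split].
  - eapply Un_cv_ext; [intro n; symmetry; apply (proj1 (sec_seq_formula n)) |].
    replace 0 with ((0 * (1 + 3 * 1 - 2 * 0) + 0) / (1 * 1)) by field.
    Un_cv_arith.
  - eapply Un_cv_ext;
      [intro n; symmetry; apply (proj2 (proj2 (sec_seq_formula n))) |].
    replace 4 with ((0 * 0 * 0 - 3 * 0 + 2 * (1 + 1)) / (1 * 1)) by field.
    Un_cv_arith.
  - eapply Un_cv_ext;
      [intro n; symmetry; apply (proj1 (proj2 (sec_seq_formula n))) |].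
    replace 0 with ((0 * (2 * 0 - 1 - 3 * 1) + 0) / (1 * 1)) by field.
    Un_cv_arith.
Qed.

End Curvature.

Theorem proposition4p3 (eps l1 l2 : nat -> R) :
  almost_Berger eps l1 l2 ->
  ((Un_cv (sec_seq eps l1 l2 0 1) 0 /\
    Un_cv (sec_seq eps l1 l2 1 2) 4 /\
    Un_cv (sec_seq eps l1 l2 0 2) 0)
   <-> reg_ge eps l1 l2 2%Z).
Proof.
  intros (eps_pos & l1_pos & l2_pos & eps_cv0 & l1_cv1 & l2_cv1 & _).
  rewrite reg_ge_2_iff by assumption; split.
  - intros [hsec01 _]; eapply defect_cv0_of_sec01; eassumption.
  - apply sec_limits_of_defect_cv0; assumption.
Qed.
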